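(* Let $\omega\subset\mathbb{R}^2$ be a bounded domain, let $W$ be a Hilbert space of functions $\omega\to\mathbb{R}^3$, continuously embedded in $L^2(\omega)^3$, with scalar product $(\cdot,\cdot)_*$ and norm $\|\cdot\|_*$, let $\mathcal{F}^k\subset W$ ($k\in\mathbb{N}_0$) be closed linear subspaces, let $f\in L^2(\omega)^3$, $\varepsilon>0$, $\tau>0$, $y^0\in W$, and set $I[y]=\frac12\|y\|_*^2-(f,y)$ and $I'[y;w]=(y,w)_*-(f,w)$. Define $y^k=y^{k-1}+\tau d_ty^k$, where $d_ty^k\in\mathcal{F}^{k-1}$ is such that $(d_ty^k,w)_*+I'[y^k;w]+\frac1\varepsilon(y_3^k,w_3)=-\frac1{2\varepsilon}(p_{\mathrm{ccv}}(y_3^{k-1}),w_3)$ for all $w\in\mathcal{F}^{k-1}$. Then this convex-concavely penalized gradient flow is well defined and satisfies, for all $k\ge1$, $I[y^k]+P_\varepsilon[y_3^k]+\tau\|d_ty^k\|_*^2\le I[y^{k-1}]+P_\varepsilon[y_3^{k-1}]$.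
   Context: $(\cdot,\cdot)$ denotes the $L^2(\omega)$ inner product, and $y_3$ the third component of $y$. The penalty functional is $P_\varepsilon[y_3]=\frac1{2\varepsilon}\int_\omega(y_3-1)_+^2dx$ with $(s)_+=\max\{s,0\}$. The function $p_{\mathrm{ccv}}:\mathbb{R}\to\mathbb{R}$ is $p_{\mathrm{ccv}}(s)=-2$ for $s>1$ and $p_{\mathrm{ccv}}(s)=-2s$ for $s\le1$; it is the derivative of the concave function $P_{\mathrm{ccv}}(s)=-2s+1$ ($s>1$), $-s^2$ ($s\le1$), which satisfies $(s-1)_+^2=s^2+P_{\mathrm{ccv}}(s)$. *)

From HB Require Import structures.
From mathcomp Require Import all_boot all_order all_algebra.
From mathcomp Require Import all_classical all_reals all_analysis.
Set Implicit Arguments. Unset Strict Implicit. Unset Printing Implicit Defensive.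
Import Order.TTheory GRing.Theory Num.Theory.
Import numFieldNormedType.Exports.
Local Open Scope classical_set_scope.
Local Open Scope ring_scope.

Section Defs.
Variable R : realType.

Definition leb2 := ((@lebesgue_measure R) \x (@lebesgue_measure R))%E.

(** index of the third component y_3 *)
Definition i3 : 'I_3 := @Ordinal 3 2 isT.

Definition pos_part (s : R) : R := Num.max s 0.

Definition p_ccv (s : R) : R := if 1 < s then -2 else -2 * s.
Definition P_ccv (s : R) : R := if 1 < s then -2 * s + 1 else - s ^+ 2.

Definition L2ip1 (om : set (R * R)) (u v : R * R -> R) : R :=
  Rintegral leb2 om (fun x => u x * v x).

Definition L2ip3 (om : set (R * R)) (u v : 'I_3 -> R * R -> R) : R :=
  \sum_(i < 3) L2ip1 om (u i) (v i).

Definition isL2 (om : set (R * R)) (u : R * R -> R) : Prop :=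
  measurable_fun om u /\ leb2.-integrable om (fun x => (u x ^+ 2)%:E).

Definition Peps (om : set (R * R)) (eps : R) (s : R * R -> R) : R :=
  (2 * eps)^-1 * Rintegral leb2 om (fun x => pos_part (s x - 1) ^+ 2).

Definition bounded_domain (om : set (R * R)) : Prop :=
  open om /\ connected om /\ om !=set0 /\
  exists M : R, forall x, om x -> `|x.1| <= M /\ `|x.2| <= M.

Variable W : completeNormedModType R.

(** ip is a scalar product on W inducing the norm of W (so W is a Hilbert space) *)
Definition inner_product_of_norm (ip : W -> W -> R) : Prop :=
  (forall x y, ip x y = ip y x) /\
  (forall a x y z, ip (a *: x + y) z = a * ip x z + ip y z) /\
  (forall x, ip x x = `|x| ^+ 2).

(** iota realises W as a space of functions omega -> R^3, linearly and
    continuously embedded in L^2(omega)^3 *)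
Definition cont_embedding (om : set (R * R)) (iota : W -> 'I_3 -> R * R -> R) : Prop :=
  (forall a x y i p, iota (a *: x + y) i p = a * iota x i p + iota y i p) /\
  (forall x y, (forall i p, om p -> iota x i p = iota y i p) -> x = y) /\
  (forall x i, isL2 om (iota x i)) /\
  (exists C : R, forall x, Num.sqrt (L2ip3 om (iota x) (iota x)) <= C * `|x|).

Definition closed_subspace (F : set W) : Prop :=
  closed F /\ F 0 /\ (forall a x y, F x -> F y -> F (a *: x + y)).

Variables (om : set (R * R)) (ip : W -> W -> R) (iota : W -> 'I_3 -> R * R -> R)
  (f : 'I_3 -> R * R -> R).

Definition Ienergy (y : W) : R := 2^-1 * `|y| ^+ 2 - L2ip3 om f (iota y).
Definition Ideriv (y w : W) : R := ip y w - L2ip3 om f (iota w).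

(** one step of the convex-concavely penalized gradient flow: d = d_t y^k is an
    admissible update from yprev = y^{k-1} in the subspace Fk = F^{k-1} *)
Definition ccv_step (eps tau : R) (Fk : set W) (yprev d : W) : Prop :=
  Fk d /\
  forall w, Fk w ->
    ip d w + Ideriv (yprev + tau *: d) w
      + eps^-1 * L2ip1 om (iota (yprev + tau *: d) i3) (iota w i3)
    = - (2 * eps)^-1 * L2ip1 om (fun x => p_ccv (iota yprev i3 x)) (iota w i3).

(** discrete time derivative d_t y^{k+1} = (y^{k+1} - y^k)/tau *)
Definition dt (tau : R) (y : nat -> W) (k : nat) : W := tau^-1 *: (y k.+1 - y k).

End Defs.

From HB Require Import structures.
From mathcomp Require Import all_boot all_order all_algebra.
From mathcomp Require Import all_classical all_reals all_analysis.
From mathcomp Require Import measurable_realfun.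
From mathcomp Require Import ring lra.
Import Order.TTheory GRing.Theory Num.Theory.
Import numFieldNormedType.Exports.
Local Open Scope classical_set_scope.
Local Open Scope ring_scope.
Set Implicit Arguments. Unset Strict Implicit.

(* The step equation is the Euler-Lagrange equation, on the closed subspace F^{k-1}, of
   the quadratic functional (1/2) a(d, d) - l(d) with the coercive bounded symmetric form
   a(u, v) = (1 + tau) (u, v)_* + (tau / eps) (u_3, v_3).  Hence d_t y^k exists and is unique
   by the Lax-Milgram argument: a minimizing sequence is Cauchy by uniform convexity, its
   limit is a minimizer, and a minimizer solves the Euler-Lagrange equation.

   For the energy decrease, split (s - 1)_+^2 = s^2 + P_ccv(s) with P_ccv concave.  The scheme
   treats the convex part implicitly and the concave part explicitly, so the increment of the
   penalty is bounded by its linearization 2 y^k_3 (y^k_3 - y^{k-1}_3)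
   + p_ccv(y^{k-1}_3) (y^k_3 - y^{k-1}_3).  Testing the step equation with w = d_t y^k and
   expanding the quadratic energy I exactly leaves -(tau^2 / 2) ||d_t y^k||_*^2 <= 0. *)

Lemma quadratic_ge0_sqr_le (R : realFieldType) (A B C : R) : 0 <= C ->
  (forall t, 0 <= A + 2 * t * B + t ^+ 2 * C) -> B ^+ 2 <= A * C.
Proof.
move=> C_ge0 q_ge0.
have [C0|C_neq0] := eqVneq C 0.
  rewrite C0 mulr0; have [->|B_neq0] := eqVneq B 0; first by rewrite expr0n.
  have := q_ge0 (- (A + 1) / (2 * B)); rewrite C0 mulr0 addr0.
  have -> : 2 * (- (A + 1) / (2 * B)) * B = - (A + 1) by field.
  lra.
have C_gt0 : 0 < C by rewrite lt_def C_neq0.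
have := q_ge0 (- B / C).
have -> : A + 2 * (- B / C) * B + (- B / C) ^+ 2 * C = A - B ^+ 2 / C by field.
by rewrite subr_ge0 ler_pdivrMr.
Qed.

Lemma quadratic_ge0_lin_eq0 (R : realFieldType) (A B : R) :
  (forall t, 0 <= t * A + t ^+ 2 * B) -> A = 0.
Proof.
move=> q_ge0; have B_ge0 : 0 <= B by have := q_ge0 1; have := q_ge0 (-1); lra.
have : (A / 2) ^+ 2 <= 0 * B.
  apply: quadratic_ge0_sqr_le => // t.
  by have -> : 0 + 2 * t * (A / 2) = t * A by field.
rewrite mul0r => A2_le0.
suff : A / 2 == 0 by rewrite mulf_eq0 invr_eq0 pnatr_eq0 orbF => /eqP.
by rewrite -sqrf_eq0 eq_le A2_le0 sqr_ge0.
Qed.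

Section SymmetricBilinearForm.
Variables (R : comRingType) (W : lmodType R) (a : W -> W -> R).
Hypotheses (a_sym : forall x y, a x y = a y x)
  (a_linl : forall s x y z, a (s *: x + y) z = s * a x z + a y z).

Lemma bilin_linr z s x y : a z (s *: x + y) = s * a z x + a z y.
Proof. by rewrite a_sym a_linl !(a_sym z). Qed.

Lemma bilin_sqrD x y t :
  a (x + t *: y) (x + t *: y) = a x x + 2 * t * a x y + t ^+ 2 * a y y.
Proof.
by rewrite [x + _]addrC a_linl !bilin_linr (a_sym y x); ring.
Qed.

End SymmetricBilinearForm.

Lemma bilin_norm_le (R : rcfType) (W : lmodType R) (a : W -> W -> R) :
  (forall x y, a x y = a y x) ->
  (forall s x y z, a (s *: x + y) z = s * a x z + a y z) ->
  (forall u, 0 <= a u u) ->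
  forall x y, `|a x y| <= Num.sqrt (a x x) * Num.sqrt (a y y).
Proof.
move=> a_sym a_linl a_ge0 x y.
rewrite -sqrtrM // -sqrtr_sqr ler_sqrt ?mulr_ge0 //.
apply: quadratic_ge0_sqr_le => // t.
by rewrite -bilin_sqrD.
Qed.

Section LaxMilgram.
Variables (R : realType) (W : completeNormedModType R).
Variables (a : W -> W -> R) (l : W -> R) (F : set W) (K L : R).
Hypotheses (F_subspace : closed_subspace F)
  (a_sym : forall x y, a x y = a y x)
  (a_linl : forall s x y z, a (s *: x + y) z = s * a x z + a y z)
  (a_coercive : forall u, `|u| ^+ 2 <= a u u)
  (a_bounded : forall u v, `|a u v| <= K * `|u| * `|v|)
  (l_lin : forall s x y, l (s *: x + y) = s * l x + l y)
  (l_bounded : forall u, `|l u| <= L * `|u|).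

Let F_lin s x y : F x -> F y -> F (s *: x + y).
Proof. by case: F_subspace => _ [_]; apply. Qed.

Let F_sub x y : F x -> F y -> F (x - y).
Proof. by move=> Fx Fy; rewrite addrC -scaleN1r; apply: F_lin. Qed.

Let a_ge0 u : 0 <= a u u.
Proof. exact: le_trans (sqr_ge0 _) (a_coercive u). Qed.

Let J u := 2^-1 * a u u - l u.

Lemma energy_shift x y t :
  J (x + t *: y) = J x + t * (a x y - l y) + 2^-1 * t ^+ 2 * a y y.
Proof. rewrite /J bilin_sqrD // [x + _]addrC l_lin; lra. Qed.

Lemma energy_ge u : - (L ^+ 2) / 2 <= J u.
Proof.
have := a_coercive u; have := l_bounded u; rewrite ler_norml => /andP[_ lu] au.
by have := sqr_ge0 (`|u| - L); rewrite /J; nra.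
Qed.

Let m := inf (J @` F).

Let energy_has_inf : has_inf (J @` F).
Proof.
split; first by exists (J 0), 0 => //; case: F_subspace => _ [].
by exists (- (L ^+ 2) / 2) => _ [u _ <-]; apply: energy_ge.
Qed.

Lemma energy_inf_le u : F u -> m <= J u.
Proof. by move=> Fu; apply: (ge_inf energy_has_inf.2); exists u. Qed.

(* Uniform convexity of [J], from the expansion of [J] at the midpoint of [u] and [v]. *)
Lemma subspace_dist_sqr_le u v : F u -> F v ->
  `|v - u| ^+ 2 <= 4 * (J u + J v - 2 * m).
Proof.
move=> Fu Fv.
have Fmid : F (u + 2^-1 *: (v - u)) by rewrite addrC; apply: F_lin; first exact: F_sub.
have Jv : J v = J (u + 1 *: (v - u)) by rewrite scale1r addrC subrK.
have := energy_inf_le Fmid; have := a_coercive (v - u).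
rewrite Jv !energy_shift expr1n; lra.
Qed.

Lemma energy_le_dist x y : J x <= J y + (`|K| * `|x| + `|L|) * `|x - y|.
Proof.
have -> : J y = J (x + (-1) *: (x - y)) by rewrite scaleN1r opprB addrC subrK.
rewrite energy_shift; set v := x - y.
have axv : a x v <= `|K| * `|x| * `|v|.
  apply: le_trans (ler_norm _) (le_trans (a_bounded x v) _).
  by rewrite -!mulrA ler_wpM2r ?mulr_ge0 ?ler_norm.
have lv : - l v <= `|L| * `|v|.
  apply: le_trans (ler_norm _) _; rewrite normrN.
  exact: le_trans (l_bounded v) (ler_wpM2r (normr_ge0 _) (ler_norm L)).
have := a_ge0 v; rewrite sqrrN expr1n; lra.
Qed.

Section MinimizingSequence.
Variable u : nat -> W.
Hypotheses (Fu : forall n, F (u n)) (Ju : forall n, J (u n) < m + harmonic n).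

Lemma minimizing_seq_cvg : cvg (u @ \oo).
Proof.
apply: cauchy_cvg; apply: cauchy_exP => e e_gt0.
have e8_gt0 : 0 < e ^+ 2 / 8 by rewrite divr_gt0 ?exprn_gt0.
have [N _ hN] := near_infty_natSinv_lt (PosNum e8_gt0).
have small n : (N <= n)%N -> harmonic n < e ^+ 2 / 8 := hN n.
exists (u N), N => // n /= le_Nn; rewrite -ball_normE /ball_ /=.
rewrite -ltr_sqr ?nnegrE ?normr_ge0 ?ltW //.
have := subspace_dist_sqr_le (Fu n) (Fu N).
have := Ju N; have := Ju n; have := small N (leqnn N); have := small n le_Nn; lra.
Qed.

Lemma minimizing_seq_energy_cvg : J (u n) @[n --> \oo] --> m.
Proof.
apply: (@squeeze_cvgr _ _ _ _ (fun=> m) (fun n => m + harmonic n)).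
- by near=> n; rewrite energy_inf_le //=; exact: ltW.
- exact: cvg_cst.
- by rewrite -{2}(addr0 m); apply: cvgD; [exact: cvg_cst | exact: cvg_harmonic].
Unshelve. all: by end_near.
Qed.

End MinimizingSequence.

Lemma energy_minimizer_exists : exists2 d, F d & forall u, F u -> J d <= J u.
Proof.
have /choice[u u_min] n : exists u, F u /\ J u < m + harmonic n.
  have [_ [u Fu <-] Ju] := inf_adherent (harmonic_gt0 n) energy_has_inf.
  by exists u.
have Fu n : F (u n) by case: (u_min n).
have Ju n : J (u n) < m + harmonic n by case: (u_min n).
have u_cvg := minimizing_seq_cvg Fu Ju; set d := lim (u @ \oo).
have Fd : F d by apply: (closed_cvg F F_subspace.1 _ d u_cvg); apply: nearW.
exists d => // v Fv; apply: le_trans (energy_inf_le Fv).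
have dist_cvg : `|d - u n| @[n --> \oo] --> (0 : R).
  by apply/norm_cvg0P; rewrite -(subrr d); apply: cvgB => //; exact: cvg_cst.
set M := `|K| * `|d| + `|L|.
apply: (@cvgr_to_ge _ \oo _ _ (fun n => J (u n) + M * `|d - u n|)).
  rewrite -[m]addr0 -(mulr0 M); apply: cvgD; last exact: cvgMr.
  exact: minimizing_seq_energy_cvg Fu Ju.
by near=> n; exact: energy_le_dist.
Unshelve. all: by end_near.
Qed.

Lemma energy_minimizer_solves d : F d -> (forall u, F u -> J d <= J u) ->
  forall w, F w -> a d w = l w.
Proof.
move=> Fd d_min w Fw; apply/eqP; rewrite -subr_eq0; apply/eqP.
apply: (@quadratic_ge0_lin_eq0 _ _ (2^-1 * a w w)) => t.
have := d_min _ (F_lin t Fw Fd); rewrite addrC energy_shift; lra.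
Qed.

Lemma lax_milgram : exists! d, F d /\ forall w, F w -> a d w = l w.
Proof.
have [d Fd d_min] := energy_minimizer_exists.
exists d; split; first by split => //; exact: energy_minimizer_solves.
move=> d' [Fd' d'_sol]; apply/eqP; rewrite -subr_eq0 -normr_eq0 -sqrf_eq0.
have : a (d' - d) (d' - d) = 0.
  have Fv := F_sub Fd' Fd; set v := d' - d in Fv *.
  have -> : a v v = a ((-1) *: d + d') v by rewrite scaleN1r addrC.
  by rewrite a_linl d'_sol // (energy_minimizer_solves Fd d_min) // mulN1r addNr.
by move=> a0; rewrite eq_le sqr_ge0 andbT distrC -a0; exact: a_coercive.
Qed.

End LaxMilgram.

Section ConvexConcaveSplitting.
Variable R : realType.

Lemma pos_part_sqr_split (s : R) : pos_part (s - 1) ^+ 2 = s ^+ 2 + P_ccv s.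
Proof.
rewrite /pos_part /P_ccv; case: ifPn => [s_gt1|]; last rewrite -real_leNgt ?num_real // => s_le1.
  by rewrite max_l ?subr_ge0 ?ltW //; ring.
by rewrite max_r ?subr_le0 // expr0n /=; ring.
Qed.

Lemma P_ccv_concave (s t : R) : P_ccv s - P_ccv t <= p_ccv t * (s - t).
Proof.
rewrite /P_ccv /p_ccv; have := sqr_ge0 (s - t); have := sqr_ge0 (s - 1).
by case: (ltrP 1 s) => s1; case: (ltrP 1 t) => t1; nra.
Qed.

Lemma pos_part_sqr_increment_le (s t : R) :
  pos_part (s - 1) ^+ 2 - pos_part (t - 1) ^+ 2 <= 2 * s * (s - t) + p_ccv t * (s - t).
Proof.
rewrite !pos_part_sqr_split; have := P_ccv_concave s t; have := sqr_ge0 (s - t); nra.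
Qed.

End ConvexConcaveSplitting.

Section L2.
Variables (R : realType) (om : set (R * R)).
Hypothesis om_meas : measurable om.

Local Notation integrable := ((@leb2 R).-integrable om).

Let integrable_le (u v : R * R -> R) : measurable_fun om u ->
  (forall x, om x -> `|u x| <= `|v x|) -> integrable (EFin \o v) -> integrable (EFin \o u).
Proof. by move=> mu uv iv; apply: le_integrable iv => //; exact/measurable_EFinP. Qed.

Let integrableD_fin (u v : R * R -> R) : integrable (EFin \o u) -> integrable (EFin \o v) ->
  integrable (EFin \o (fun x => u x + v x)).
Proof. by move=> iu iv; apply: eq_integrable (integrableD _ iu iv) => //. Qed.

Let integrableZl_fin (k : R) (u : R * R -> R) : integrable (EFin \o u) ->
  integrable (EFin \o (fun x => k * u x)).
Proof. by move=> iu; apply: eq_integrable (integrableZl _ k iu) => //. Qed.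

Let integrableB_fin (u v : R * R -> R) : integrable (EFin \o u) -> integrable (EFin \o v) ->
  integrable (EFin \o (fun x => u x - v x)).
Proof. by move=> iu iv; apply: eq_integrable (integrableB _ iu iv) => //. Qed.

Lemma isL2_integrable_mul (u v : R * R -> R) : isL2 om u -> isL2 om v ->
  integrable (EFin \o (fun x => u x * v x)).
Proof.
move=> [mu iu] [mv iv].
apply: (@integrable_le _ (fun x => u x ^+ 2 + v x ^+ 2)); first exact: measurable_funM.
  move=> x _; rewrite [X in _ <= X]ger0_norm ?addr_ge0 ?sqr_ge0 // normrM.
  rewrite -(real_normK (num_real (u x))) -(real_normK (num_real (v x))).
  by have := sqr_ge0 (`|u x| - `|v x|); nra.
exact: integrableD_fin.
Qed.

Lemma isL2_lin (s : R) (u v : R * R -> R) : isL2 om u -> isL2 om v ->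
  isL2 om (fun x => s * u x + v x).
Proof.
move=> [mu iu] [mv iv].
have mw : measurable_fun om (fun x => s * u x + v x).
  exact: measurable_funD (measurable_funM (measurable_cst _) mu) mv.
split=> //; apply: (@integrable_le _ (fun x => 2 * s ^+ 2 * u x ^+ 2 + 2 * v x ^+ 2)).
- exact: measurable_funX.
- move=> x _; have d2 := sqr_ge0 (s * u x - v x); have v2 := sqr_ge0 (v x).
  have su2 : 0 <= s ^+ 2 * u x ^+ 2 by rewrite mulr_ge0 ?sqr_ge0.
  by rewrite !ger0_norm ?sqr_ge0 //; nra.
- apply: integrableD_fin; last exact: integrableZl_fin.
  exact: (integrableZl_fin (2 * s ^+ 2) iu).
Qed.

Lemma L2ip1C (u v : R * R -> R) : L2ip1 om u v = L2ip1 om v u.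
Proof. by apply: eq_Rintegral => x _; rewrite mulrC. Qed.

Lemma L2ip1_ge0 (u : R * R -> R) : 0 <= L2ip1 om u u.
Proof. by apply: Rintegral_ge0 => x _; rewrite -expr2 sqr_ge0. Qed.

Lemma L2ip1_linl (s : R) (u v w : R * R -> R) : isL2 om u -> isL2 om v -> isL2 om w ->
  L2ip1 om (fun x => s * u x + v x) w = s * L2ip1 om u w + L2ip1 om v w.
Proof.
move=> Lu Lv Lw; rewrite /L2ip1 -RintegralZl ?isL2_integrable_mul //.
rewrite -RintegralD ?integrableZl_fin ?isL2_integrable_mul //.
by apply: eq_Rintegral => x _; rewrite mulrDl mulrA.
Qed.

Lemma L2ip1_norm_le (u v : R * R -> R) : isL2 om u -> isL2 om v ->
  `|L2ip1 om u v| <= Num.sqrt (L2ip1 om u u) * Num.sqrt (L2ip1 om v v).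
Proof.
move=> Lu Lv; rewrite -sqrtrM ?L2ip1_ge0 // -sqrtr_sqr ler_sqrt ?mulr_ge0 ?L2ip1_ge0 //.
apply: quadratic_ge0_sqr_le; first exact: L2ip1_ge0.
move=> t; have := L2ip1_ge0 (fun x => t * v x + u x).
rewrite L2ip1_linl //; last exact: isL2_lin.
rewrite (L2ip1C v) (L2ip1C u) !L2ip1_linl // (L2ip1C v u); lra.
Qed.

Lemma isL2_p_ccv (u : R * R -> R) : isL2 om u -> isL2 om (fun x => p_ccv (u x)).
Proof.
move=> [mu iu].
have p_ccvE x : p_ccv (u x) = -2 * Num.min (u x) 1.
  by rewrite /p_ccv; case: (ltrP 1 (u x)) => ux; rewrite ?mulr1 //; congr (_ * _); apply/eqP.
have mp : measurable_fun om (fun x => p_ccv (u x)).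
  rewrite (funext p_ccvE).
  exact: measurable_funM (measurable_cst _) (measurable_minr mu (measurable_cst _)).
split=> //; apply: (@integrable_le _ (fun x => 4 * u x ^+ 2)).
- exact: measurable_funX.
- move=> x _; have u2 := sqr_ge0 (u x).
  rewrite ger0_norm ?sqr_ge0 // ger0_norm; last by rewrite mulr_ge0.
  by rewrite /p_ccv; case: (ltrP 1 (u x)) => ux; nra.
- exact: (integrableZl_fin 4 iu).
Qed.

Lemma integrable_pos_part_sqr (u : R * R -> R) : isL2 om u ->
  integrable (EFin \o (fun x => pos_part (u x - 1) ^+ 2)).
Proof.
move=> [mu iu]; apply: (@integrable_le _ (fun x => u x ^+ 2)) => //.
- apply/measurable_funX/measurable_maxr/measurable_cst.
  exact: measurable_funB mu (measurable_cst _).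
- move=> x _; rewrite !ger0_norm ?sqr_ge0 // /pos_part.
  by case: (ltrP (u x - 1) 0) => ux; [rewrite expr0n /= sqr_ge0 | nra].
Qed.

Lemma penalty_increment_le (t : R) (u v : R * R -> R) : isL2 om u -> isL2 om v ->
  Rintegral (@leb2 R) om (fun x => pos_part (t * v x + u x - 1) ^+ 2)
    - Rintegral (@leb2 R) om (fun x => pos_part (u x - 1) ^+ 2)
  <= t * (2 * L2ip1 om (fun x => t * v x + u x) v + L2ip1 om (fun x => p_ccv (u x)) v).
Proof.
move=> Lu Lv; have Ly := isL2_lin t Lv Lu; have Lp := isL2_p_ccv Lu.
have iyv1 := isL2_integrable_mul Ly Lv; have iyv := integrableZl_fin 2 iyv1.
have ipv := isL2_integrable_mul Lp Lv.
have irhs := integrableD_fin iyv ipv.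
rewrite -RintegralB ?integrable_pos_part_sqr // /L2ip1 -RintegralZl // -RintegralD //.
rewrite -RintegralZl //; apply: le_Rintegral => //.
- exact: integrableB_fin (integrable_pos_part_sqr Ly) (integrable_pos_part_sqr Lu).
- exact: integrableZl_fin.
move=> x _; have := pos_part_sqr_increment_le (t * v x + u x) (u x).
by rewrite addrK; nra.
Qed.

End L2.

Section Embedding.
Variables (R : realType) (om : set (R * R)) (W : normedModType R).
Variables (iota : W -> 'I_3 -> R * R -> R) (C : R).
Hypotheses (om_meas : measurable om)
  (iota_lin : forall s x y i p, iota (s *: x + y) i p = s * iota x i p + iota y i p)
  (iota_L2 : forall x i, isL2 om (iota x i))
  (iota_bound : forall x, Num.sqrt (L2ip3 om (iota x) (iota x)) <= C * `|x|).

Lemma iotaE s x y i : iota (s *: x + y) i = (fun p => s * iota x i p + iota y i p).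
Proof. by apply/funext => p; exact: iota_lin. Qed.

Lemma L2ip1_iota_linl (h : R * R -> R) s x y i : isL2 om h ->
  L2ip1 om (iota (s *: x + y) i) h = s * L2ip1 om (iota x i) h + L2ip1 om (iota y i) h.
Proof. by move=> Lh; rewrite iotaE L2ip1_linl. Qed.

Lemma L2ip1_iota_linr (h : R * R -> R) s x y i : isL2 om h ->
  L2ip1 om h (iota (s *: x + y) i) = s * L2ip1 om h (iota x i) + L2ip1 om h (iota y i).
Proof. by move=> Lh; rewrite !(L2ip1C _ h) L2ip1_iota_linl. Qed.

Lemma L2ip3_iota_linr (g : 'I_3 -> R * R -> R) s x y : (forall i, isL2 om (g i)) ->
  L2ip3 om g (iota (s *: x + y)) = s * L2ip3 om g (iota x) + L2ip3 om g (iota y).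
Proof.
move=> Lg; rewrite /L2ip3 mulr_sumr -big_split /=.
by apply: eq_bigr => i _; rewrite L2ip1_iota_linr.
Qed.

Lemma sqrt_L2ip1_iota_le x i : Num.sqrt (L2ip1 om (iota x i) (iota x i)) <= `|C| * `|x|.
Proof.
apply: le_trans (le_trans (iota_bound x) _); last by rewrite ler_wpM2r ?ler_norm.
rewrite ler_sqrt; last by apply: sumr_ge0 => j _; exact: L2ip1_ge0.
by rewrite /L2ip3 (bigD1 i) //= lerDl; apply: sumr_ge0 => j _; exact: L2ip1_ge0.
Qed.

Lemma L2ip1_iota_norm_le (h : R * R -> R) w i : isL2 om h ->
  `|L2ip1 om h (iota w i)| <= Num.sqrt (L2ip1 om h h) * `|C| * `|w|.
Proof.
move=> Lh; apply: le_trans (L2ip1_norm_le om_meas Lh (iota_L2 w i)) _.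
by rewrite -mulrA ler_wpM2l ?sqrtr_ge0 ?sqrt_L2ip1_iota_le.
Qed.

End Embedding.

Section PenalizedStep.
Variables (R : realType) (om : set (R * R)) (W : completeNormedModType R).
Variables (ip : W -> W -> R) (iota : W -> 'I_3 -> R * R -> R) (f : 'I_3 -> R * R -> R).
Variables (eps tau : R).
Hypotheses (om_meas : measurable om) (ip_norm : inner_product_of_norm ip)
  (iota_emb : cont_embedding om iota) (f_L2 : forall i, isL2 om (f i))
  (eps_gt0 : 0 < eps) (tau_gt0 : 0 < tau).

Let ip_sym : forall x y, ip x y = ip y x := ip_norm.1.
Let ip_linl : forall s x y z, ip (s *: x + y) z = s * ip x z + ip y z := ip_norm.2.1.
Let ip_normE : forall x, ip x x = `|x| ^+ 2 := ip_norm.2.2.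
Let iota_lin : forall s x y i p, iota (s *: x + y) i p = s * iota x i p + iota y i p :=
  iota_emb.1.
Let iota_L2 : forall x i, isL2 om (iota x i) := iota_emb.2.2.1.

Let ip_norm_le u v : `|ip u v| <= `|u| * `|v|.
Proof.
apply: le_trans (bilin_norm_le ip_sym ip_linl _ u v) _.
  by move=> x; rewrite ip_normE sqr_ge0.
by rewrite !ip_normE !sqrtr_sqr !normr_id.
Qed.

Definition step_form (u v : W) : R :=
  (1 + tau) * ip u v + tau / eps * L2ip1 om (iota u i3) (iota v i3).

Definition step_load (yprev w : W) : R :=
  L2ip3 om f (iota w) - ip yprev w - eps^-1 * L2ip1 om (iota yprev i3) (iota w i3)
  - (2 * eps)^-1 * L2ip1 om (fun x => p_ccv (iota yprev i3 x)) (iota w i3).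

Lemma ccv_stepE (Fk : set W) yprev d :
  ccv_step om ip iota f eps tau Fk yprev d <->
  Fk d /\ forall w, Fk w -> step_form d w = step_load yprev w.
Proof.
have stepE w : ip d w + Ideriv om ip iota f (yprev + tau *: d) w
      + eps^-1 * L2ip1 om (iota (yprev + tau *: d) i3) (iota w i3)
    = - (2 * eps)^-1 * L2ip1 om (fun x => p_ccv (iota yprev i3 x)) (iota w i3)
    <-> step_form d w = step_load yprev w.
  rewrite /Ideriv /step_form /step_load (addrC yprev) ip_linl L2ip1_iota_linl //.
  by split=> h; lra.
by split=> -[Fd hd]; split=> // w Fw; apply/stepE; exact: hd.
Qed.

Let step_form_sym u v : step_form u v = step_form v u.
Proof. by rewrite /step_form ip_sym L2ip1C. Qed.

Let step_form_linl s x y z : step_form (s *: x + y) z = s * step_form x z + step_form y z.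
Proof. by rewrite /step_form ip_linl L2ip1_iota_linl //; lra. Qed.

Let step_form_coercive u : `|u| ^+ 2 <= step_form u u.
Proof.
rewrite /step_form ip_normE.
have := mulr_ge0 (ltW (divr_gt0 tau_gt0 eps_gt0)) (L2ip1_ge0 om (iota u i3)).
by have := mulr_ge0 (ltW tau_gt0) (sqr_ge0 `|u|); lra.
Qed.

Let step_form_bounded : exists K, forall u v, `|step_form u v| <= K * `|u| * `|v|.
Proof.
have [C iota_bound] := iota_emb.2.2.2.
exists (1 + tau + tau / eps * (`|C| * `|C|)) => u v.
have tau_eps_ge0 : 0 <= tau / eps by rewrite ltW ?divr_gt0.
have ip_le := ip_norm_le u v.
have L2_le : `|L2ip1 om (iota u i3) (iota v i3)| <= `|C| * `|u| * `|C| * `|v|.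
  apply: le_trans (L2ip1_iota_norm_le om_meas iota_L2 iota_bound v i3 (iota_L2 u i3)) _.
  do 2 apply: ler_wpM2r => //.
  exact: sqrt_L2ip1_iota_le iota_bound u i3.
have tau1_ge0 : 0 <= 1 + tau by rewrite addr_ge0 ?ltW.
apply: le_trans (ler_normD _ _) _.
rewrite (normrM (1 + tau)) (normrM (tau / eps)) (ger0_norm tau1_ge0) (ger0_norm tau_eps_ge0).
have := ler_wpM2l tau1_ge0 ip_le; have := ler_wpM2l tau_eps_ge0 L2_le; lra.
Qed.

Let step_load_lin yprev s x y :
  step_load yprev (s *: x + y) = s * step_load yprev x + step_load yprev y.
Proof.
have Lp := isL2_p_ccv om_meas (iota_L2 yprev i3).
rewrite /step_load (L2ip3_iota_linr om_meas iota_lin) // ip_sym ip_linl !(ip_sym yprev).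
by rewrite !(L2ip1_iota_linr om_meas iota_lin) //; lra.
Qed.

Let step_load_bounded yprev : exists L, forall w, `|step_load yprev w| <= L * `|w|.
Proof.
have [C iota_bound] := iota_emb.2.2.2.
have Lp := isL2_p_ccv om_meas (iota_L2 yprev i3).
pose s (h : R * R -> R) := Num.sqrt (L2ip1 om h h) * `|C|.
exists (\sum_i s (f i) + `|yprev| + eps^-1 * s (iota yprev i3)
  + (2 * eps)^-1 * s (fun x => p_ccv (iota yprev i3 x))) => w.
have bound h i : isL2 om h -> `|L2ip1 om h (iota w i)| <= s h * `|w|.
  by move=> Lh; have := L2ip1_iota_norm_le om_meas iota_L2 iota_bound w i Lh.
have hf : `|L2ip3 om f (iota w)| <= (\sum_i s (f i)) * `|w|.
  rewrite /L2ip3 mulr_suml; apply: le_trans (ler_norm_sum _ _ _) _.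
  by apply: ler_sum => i _; exact: bound.
have e1_ge0 : 0 <= eps^-1 by rewrite invr_ge0 ltW.
have e2_ge0 : 0 <= (2 * eps)^-1 by rewrite invr_ge0 mulr_ge0 ?ltW.
have hy := ler_wpM2l e1_ge0 (bound _ i3 (iota_L2 yprev i3)).
have hp := ler_wpM2l e2_ge0 (bound _ i3 Lp).
have hip := ip_norm_le yprev w.
rewrite /step_load; apply: le_trans (ler_normB _ _) _.
rewrite normrM (ger0_norm e2_ge0); apply: le_trans (lerD (ler_normB _ _) (lexx _)) _.
rewrite normrM (ger0_norm e1_ge0).
apply: le_trans (lerD (lerD (ler_normB _ _) (lexx _)) (lexx _)) _.
lra.
Qed.

Lemma ccv_step_exists_unique (Fk : set W) yprev : closed_subspace Fk ->
  exists! d, ccv_step om ip iota f eps tau Fk yprev d.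
Proof.
move=> Fk_subspace.
have [K step_form_le] := step_form_bounded; have [L step_load_le] := step_load_bounded yprev.
have [d [d_sol d_uniq]] := lax_milgram Fk_subspace step_form_sym step_form_linl
  step_form_coercive step_form_le (step_load_lin yprev) step_load_le.
by exists d; split=> [|d' /ccv_stepE]; [exact/ccv_stepE | exact: d_uniq].
Qed.

Lemma ccv_step_energy_le (Fk : set W) yprev d :
  ccv_step om ip iota f eps tau Fk yprev d ->
  Ienergy om iota f (yprev + tau *: d) + Peps om eps (iota (yprev + tau *: d) i3)
    + tau * `|d| ^+ 2
  <= Ienergy om iota f yprev + Peps om eps (iota yprev i3).
Proof.
move=> /ccv_stepE[Fd /(_ d Fd)]; rewrite /step_form /step_load ip_normE => step.
have normE : `|yprev + tau *: d| ^+ 2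
    = `|yprev| ^+ 2 + 2 * tau * ip yprev d + tau ^+ 2 * `|d| ^+ 2.
  by rewrite -!ip_normE bilin_sqrD.
have y3E : iota (yprev + tau *: d) i3 = (fun p => tau * iota d i3 p + iota yprev i3 p).
  by rewrite addrC iotaE.
have pen := penalty_increment_le om_meas tau (iota_L2 yprev i3) (iota_L2 d i3).
rewrite L2ip1_linl ?iota_L2 // in pen.
rewrite /Ienergy /Peps normE y3E (addrC yprev) (L2ip3_iota_linr om_meas iota_lin) //.
have e_gt0 : 0 < (2 * eps)^-1 by rewrite invr_gt0 mulr_gt0.
have := ler_wpM2l (ltW e_gt0) pen.
have := congr1 (fun z => tau * z) step.
have := mulr_ge0 (sqr_ge0 tau) (sqr_ge0 `|d|).
rewrite invfM; lra.
Qed.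

End PenalizedStep.

Theorem proposition6p1 (R : realType) (om : set (R * R))
  (Hom : bounded_domain om) (Hmeas : measurable om)
  (W : completeNormedModType R) (ip : W -> W -> R)
  (Hip : inner_product_of_norm ip)
  (iota : W -> 'I_3 -> R * R -> R) (Hiota : cont_embedding om iota)
  (F : nat -> set W) (HF : forall k, closed_subspace (F k))
  (f : 'I_3 -> R * R -> R) (Hf : forall i, isL2 om (f i))
  (eps tau : R) (Heps : 0 < eps) (Htau : 0 < tau) (y0 : W) :
  (* well-definedness: every step has a unique update d_t y^k in F^{k-1} *)
  (forall (k : nat) (yprev : W),
      exists! d : W, ccv_step om ip iota f eps tau (F k) yprev d) /\
  (* energy decrease along the scheme started at y^0 *)
  (forall y : nat -> W, y 0%N = y0 ->
     (forall k : nat, ccv_step om ip iota f eps tau (F k) (y k) (dt tau y k)) ->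
     forall k : nat,
       Ienergy om iota f (y k.+1) + Peps om eps (iota (y k.+1) i3)
         + tau * `|dt tau y k| ^+ 2
       <= Ienergy om iota f (y k) + Peps om eps (iota (y k) i3)).
Proof.
split=> [k yprev | y _ y_step k]; first exact: ccv_step_exists_unique.
have -> : y k.+1 = y k + tau *: dt tau y k.
  by rewrite /dt scalerA mulfV ?gt_eqF // scale1r addrC subrK.
exact: ccv_step_energy_le (y_step k).
Qed.
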